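(* Let $B$ be a unital $C^*$-algebra with a $*$-isomorphism $\psi:B\to M_n\otimes B$ satisfying $\psi(1)=I_n\otimes1$. Then for all $m\ge1$, $1\le i,j\le n$ and $b,c\in B$: $\chi_{mij}(\sigma_m(b)\,c)=b\,\chi_{mij}(c)$ and $\chi_{mij}(c\,\sigma_m(b))=\chi_{mij}(c)\,b$.
   Context: $M_n=M_n(\mathbb{C})$, matrix units $E_{kl}$, identity $I_n$. Define $\psi_0=\mathrm{id}_B$, $\psi_{m+1}=(\mathrm{id}^{\otimes m}\otimes\psi)\circ\psi_m:B\to M_n^{\otimes(m+1)}\otimes B$. With $f(b)=I_n\otimes b$, for $m\ge1$ let $\sigma_m=\psi_m^{-1}\circ(\mathrm{id}^{\otimes(m-1)}\otimes f)\circ\psi_{m-1}:B\to B$. Let $e_{ij}:M_n\to\mathbb{C}$ be the linear functional $e_{ij}(E_{kl})=\delta_{ik}\delta_{jl}$, and for $m\ge1$ let $\chi_{mij}=\psi_{m-1}^{-1}\circ(\mathrm{id}^{\otimes(m-1)}\otimes e_{ij}\otimes\mathrm{id}_B)\circ\psi_m:B\to B$, where $\mathrm{id}^{\otimes(m-1)}\otimes e_{ij}\otimes\mathrm{id}_B:M_n^{\otimes m}\otimes B\to M_n^{\otimes(m-1)}\otimes B$ is the slice map on the $m$-th tensor factor. *)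

From HB Require Import structures.
From mathcomp Require Import all_boot all_order all_algebra.
From mathcomp Require Import complex.
From mathcomp Require Import reals.
From Stdlib Require Import ClassicalEpsilon.

Set Implicit Arguments.
Unset Strict Implicit.
Unset Printing Implicit Defensive.

Import Order.TTheory GRing.Theory Num.Theory.
Local Open Scope ring_scope.

Definition is_unital_cstar_algebra (R : realType) (B : algType R[i])
    (star : B -> B) (nrm : B -> R) : Prop :=
  [/\
      [/\ (forall x y : B, star (x + y) = star x + star y),
      (forall (a : R[i]) (x : B), star (a *: x) = a^* *: star x),
      (forall x y : B, star (x * y) = star y * star x) &
      (forall x : B, star (star x) = x)],
      [/\ (forall x : B, nrm x = 0 <-> x = 0),
          (forall x y : B, nrm (x + y) <= nrm x + nrm y),
          (forall (a : R[i]) (x : B), nrm (a *: x) = Normc.normc a * nrm x),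
          (forall x y : B, nrm (x * y) <= nrm x * nrm y) &
          (forall x : B, nrm (star x * x) = nrm x ^+ 2)] &
      (forall u : nat -> B,
         (forall e : R, 0 < e -> exists N : nat,
            forall p q : nat, (N <= p)%N -> (N <= q)%N -> nrm (u p - u q) < e) ->
         exists l : B, forall e : R, 0 < e -> exists N : nat,
            forall p : nat, (N <= p)%N -> nrm (u p - l) < e)].

(* M_n (x) B is identified with 'M[B]_n: the element sum E_kl (x) b_kl *)
(* is the matrix with (k,l) entry b_kl.  Its algebra operations are     *)
Definition is_star_isomorphism (R : realType) (B : algType R[i])
    (star : B -> B) (n : nat) (psi : B -> 'M[B]_n) : Prop :=
  [/\ (forall x y : B, psi (x + y) = psi x + psi y),
      (forall (a : R[i]) (x : B), psi (a *: x) = map_mx (fun e => a *: e) (psi x)),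
      (forall x y : B, psi (x * y) = psi x *m psi y),
      (forall x : B, psi (star x) = (map_mx star (psi x))^T) &
      bijective psi].

(* M_n^{(x) m} (x) B : coefficient families indexed by                  *)
(* idx n m = (...((tt, p_1), p_2) ..., p_m) with p_r = (k_r,l_r), and   *)
(* X : idx n m -> B  stands for                                         *)
(*   sum X(p_1,...,p_m) E_{p_1} (x) ... (x) E_{p_m} (x) X(...)          *)
(* (p_m is the m-th, i.e. last, M_n factor, adjacent to B).             *)
Fixpoint idx (n m : nat) : Type :=
  match m with
  | 0 => unit
  | m'.+1 => (idx n m' * ('I_n * 'I_n))%type
  end.

Definition tens (B : Type) (n m : nat) : Type := idx n m -> B.

(* psi_0 = id, psi_{m+1} = (id^{(x)m} (x) psi) o psi_m *)
Fixpoint psi_pow (B : Type) (n : nat) (psi : B -> 'M[B]_n) (m : nat)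
  : B -> tens B n m :=
  match m return B -> tens B n m with
  | 0 => fun b _ => b
  | m'.+1 => fun b t => psi (@psi_pow B n psi m' b t.1) t.2.1 t.2.2
  end.
Arguments psi_pow {B n} psi m _ _.

Definition inv_map (A T : Type) (a0 : A) (g : A -> T) (y : T) : A :=
  epsilon (inhabits a0) (fun x => g x = y).

(* id^{(x)m} (x) f, with f(b) = I_n (x) b *)
Definition amp_f (B : nzRingType) (n m : nat) (X : tens B n m) : tens B n m.+1 :=
  fun t => if t.2.1 == t.2.2 then X t.1 else 0.

(* id^{(x)m} (x) e_ij (x) id_B : slice on the (m+1)-th M_n factor *)
Definition slice (B : Type) (n m : nat) (i j : 'I_n) (X : tens B n m.+1)
  : tens B n m := fun t => X (t, (i, j)).

(* sigma_{m+1} = psi_{m+1}^{-1} o (id^{(x)m} (x) f) o psi_m *)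
Definition sigma (B : nzRingType) (n : nat) (psi : B -> 'M[B]_n) (m : nat)
  : B -> B :=
  fun b => inv_map 0 (psi_pow psi m.+1) (amp_f (psi_pow psi m b)).

(* chi_{(m+1) i j} = psi_m^{-1} o (id^{(x)m} (x) e_ij (x) id) o psi_{m+1} *)
Definition chi (B : nzRingType) (n : nat) (psi : B -> 'M[B]_n) (m : nat)
  (i j : 'I_n) : B -> B :=
  fun c => inv_map 0 (psi_pow psi m) (slice i j (psi_pow psi m.+1 c)).

(* psi_m is a multiplicative bijection from B onto M_n^{(x)m} (x) B.
   Transported along it, sigma_{m+1}(b) becomes I_n (x) psi_m(b) and
   chi_{(m+1)ij} becomes the slice e_ij on the last matrix factor, and in
   M_n^{(x)(m+1)} (x) B one has e_ij((I_n (x) X) Y) = X e_ij(Y) and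
   e_ij(Y (I_n (x) X)) = e_ij(Y) X. *)

From HB Require Import structures.
From mathcomp Require Import all_boot all_order all_algebra.
From mathcomp Require Import complex.
From mathcomp Require Import reals.
From Stdlib Require Import ClassicalEpsilon FunctionalExtensionality.

Set Implicit Arguments.
Unset Strict Implicit.
Unset Printing Implicit Defensive.

Import Order.TTheory GRing.Theory Num.Theory.
Local Open Scope ring_scope.

(* The product of M_n^{(x)m} (x) S in the coordinates of [tens]: matrix
   product on the last factor, with coefficients multiplied in
   M_n^{(x)(m-1)} (x) S. *)
Fixpoint tmul (S : pzRingType) (n m : nat) : tens S n m -> tens S n m -> tens S n m :=
  match m return tens S n m -> tens S n m -> tens S n m with
  | 0 => fun X Y t => X t * Y t
  | m'.+1 => fun X Y t => \sum_(r < n)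
      @tmul S n m' (fun u => X (u, (t.2.1, r))) (fun u => Y (u, (r, t.2.2))) t.1
  end.

Section TensorProduct.

Variables (S : pzRingType) (n : nat).

Lemma tmulS m (X Y : tens S n m.+1) t k l :
  tmul X Y (t, (k, l)) = \sum_(r < n) tmul (slice k r X) (slice r l Y) t.
Proof. by []. Qed.

Lemma tmul0l m (Y : tens S n m) : tmul (fun _ => 0) Y = (fun _ => 0).
Proof.
apply: functional_extensionality; elim: m Y => [|m IH] Y t /=; first exact: mul0r.
by rewrite big1 // => r _; rewrite IH.
Qed.

Lemma tmul0r m (X : tens S n m) : tmul X (fun _ => 0) = (fun _ => 0).
Proof.
apply: functional_extensionality; elim: m X => [|m IH] X t /=; first exact: mulr0.
by rewrite big1 // => r _; rewrite IH.
Qed.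

Lemma tmul_mxE m (X Y : tens 'M[S]_n n m) t k l :
  tmul X Y t k l = \sum_(r < n) tmul (fun u => X u k r) (fun u => Y u r l) t.
Proof.
elim: m X Y t => [|m IH] X Y t /=; first by rewrite -mulmxE mxE.
by rewrite summxE exchange_big; apply: eq_bigr => q _; exact: IH.
Qed.

Lemma tmul_morph (T : pzRingType) (f : S -> T) :
  {morph f : x y / x + y} -> {morph f : x y / x * y} ->
  forall m (X Y : tens S n m) t,
    f (tmul X Y t) = tmul (fun u => f (X u)) (fun u => f (Y u)) t.
Proof.
move=> fD fM; have f0 : f 0 = 0.
  by apply: (addrI (f 0)); rewrite -fD !addr0.
elim=> [|m IH] X Y t /=; first exact: fM.
by rewrite (big_morph f fD f0); apply: eq_bigr => r _; rewrite IH.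
Qed.

End TensorProduct.

Section Amplification.

Variables (S : nzRingType) (n m : nat).

Lemma slice_amp_f (X : tens S n m) k l :
  slice k l (amp_f X) = if k == l then X else (fun _ => 0).
Proof. by rewrite /slice /amp_f /=; case: (k == l). Qed.

Lemma slice_tmul_amp_fl (X : tens S n m) (Y : tens S n m.+1) i j :
  slice i j (tmul (amp_f X) Y) = tmul X (slice i j Y).
Proof.
apply: functional_extensionality => t; rewrite /slice tmulS (bigD1 i) //=.
rewrite big1 => [|r /negbTE ri]; last by rewrite slice_amp_f eq_sym ri tmul0l.
by rewrite addr0 slice_amp_f eqxx.
Qed.

Lemma slice_tmul_amp_fr (X : tens S n m) (Y : tens S n m.+1) i j :
  slice i j (tmul Y (amp_f X)) = tmul (slice i j Y) X.
Proof.
apply: functional_extensionality => t; rewrite /slice tmulS (bigD1 j) //=.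
rewrite big1 => [|r /negbTE rj]; last by rewrite slice_amp_f rj tmul0r.
by rewrite addr0 slice_amp_f eqxx.
Qed.

End Amplification.

Lemma inv_mapK (A T : Type) (a0 : A) (g : A -> T) y :
  (exists x, g x = y) -> g (inv_map a0 g y) = y.
Proof. exact: epsilon_spec. Qed.

Section IteratedIsomorphism.

Variables (B : nzRingType) (n : nat) (psi : B -> 'M[B]_n).

Lemma psi_pow_mul :
  {morph psi : x y / x + y} -> (forall x y, psi (x * y) = psi x *m psi y) ->
  forall m x y, psi_pow psi m (x * y) = tmul (psi_pow psi m x) (psi_pow psi m y).
Proof.
move=> psiD psiM; elim=> [|m IH] x y //.
apply: functional_extensionality => -[t [k l]] /=.
by rewrite IH (tmul_morph psiD) ?tmul_mxE // => ? ?; rewrite psiM mulmxE.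
Qed.

Hypothesis psi_bij : bijective psi.

Lemma psi_pow_inj m : injective (psi_pow psi m).
Proof.
elim: m => [|m IH] x y eq_xy; first exact: (congr1 (@^~ tt) eq_xy).
apply: IH; apply: functional_extensionality => t; apply: (bij_inj psi_bij).
by apply/matrixP => k l; exact: (congr1 (@^~ (t, (k, l))) eq_xy).
Qed.

Lemma psi_pow_surj m (X : tens B n m) : exists x, psi_pow psi m x = X.
Proof.
case: psi_bij => g psiK gK; elim: m X => [|m IH] X.
  by exists (X tt); apply: functional_extensionality => -[].
have [x psi_x] := IH (fun t => g (\matrix_(k, l) X (t, (k, l)))).
exists x; apply: functional_extensionality => -[t [k l]] /=.
by rewrite psi_x gK mxE.
Qed.

Lemma psi_pow_sigma m b :
  psi_pow psi m.+1 (sigma psi m b) = amp_f (psi_pow psi m b).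
Proof. exact/inv_mapK/psi_pow_surj. Qed.

Lemma psi_pow_chi m i j c :
  psi_pow psi m (chi psi m i j c) = slice i j (psi_pow psi m.+1 c).
Proof. exact/inv_mapK/psi_pow_surj. Qed.

End IteratedIsomorphism.

Theorem corollary3p2 (R : realType) (B : algType R[i]) (star : B -> B)
    (nrm : B -> R) (n : nat) (psi : B -> 'M[B]_n) :
  is_unital_cstar_algebra star nrm ->
  is_star_isomorphism star psi ->
  psi 1 = 1%:M ->
  forall (m : nat) (i j : 'I_n) (b c : B),
    chi psi m i j (sigma psi m b * c) = b * chi psi m i j c /\
    chi psi m i j (c * sigma psi m b) = chi psi m i j c * b.
Proof.
move=> _ [psiD _ psiM _ psi_bij] _ m i j b c.
have psi_powM := psi_pow_mul psiD psiM.
have chiE := psi_pow_chi psi_bij.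
split; apply: (psi_pow_inj psi_bij (m := m));
  rewrite chiE !psi_powM chiE psi_pow_sigma //.
- exact: slice_tmul_amp_fl.
- exact: slice_tmul_amp_fr.
Qed.
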